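(* Let $G$ be a finite directed acyclic graph whose input nodes (the nodes with no incoming edge) are the $d$ coordinates of a vector $\bm x$, and let $o$ be a leaf node of $G$. For an input node $x$, let $\mathcal P(x,o)$ be the set of directed paths from $x$ to $o$; for a path ${\bm p}$ let $\tilde{\bm p}$ be the path without its starting node, and $d_p$ the in-degree of node $p$. Assume the symmetry assumption (S): all input nodes $x$ have the same multiset $\{d_{\bm p}\}_{{\bm p}\in\mathcal P(x,o)}$ of path-degrees, where the path-degree $d_{\bm p}$ of ${\bm p}$ is the multiset $\{d_p: p\in\tilde{\bm p}\}$. Then for every input node $x$, $$\sum_{{\bm p}\in\mathcal P(x,o)}\prod_{p\in\tilde{\bm p}}\frac1{d_p}=\frac1d.$$ *)

From mathcomp Require Import all_boot all_order all_algebra.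
Set Implicit Arguments. Unset Strict Implicit. Unset Printing Implicit Defensive.
Import Order.TTheory GRing.Theory Num.Theory.

Section DAG.
Variables (V : finType) (e : rel V).

Definition acyclic : Prop := forall (v : V) (s : seq V), ~ path e v (rcons s v).

Definition indeg (v : V) : nat := #|[set u | e u v]|.

Definition inputs : {set V} := [set v | indeg v == 0%N].

Definition leaf (o : V) : Prop := forall v, ~~ e o v.

(* A directed path x = p_0 -> p_1 -> ... -> p_n = o is represented by the
   sequence s = [:: p_1; ...; p_n] of its nodes WITHOUT the starting node,
   i.e. s is the path \tilde p. *)
Definition is_dpath (x o : V) (s : seq V) : bool := path e x s && (last x s == o).

(* Paths with n edges are enumerated as n-tuples; in an acyclic graph
   every path has fewer than #|V| edges, so this lists P(x,o) exactly,
   each path once. *)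
Definition dpaths (x o : V) : seq (seq V) :=
  flatten [seq map (@tval n V) (enum [pred t : n.-tuple V | is_dpath x o t])
          | n <- iota 0 #|V|].

(* path-degree d_p: the multiset {d_p : p in \tilde p}, represented
   canonically as a sorted list of in-degrees *)
Definition path_degree (s : seq V) : seq nat := sort leq (map indeg s).

Definition symmetry_S (o : V) : Prop :=
  forall x y, x \in inputs -> y \in inputs ->
    perm_eq (map path_degree (dpaths x o)) (map path_degree (dpaths y o)).

End DAG.

From mathcomp Require Import all_boot all_order all_algebra.
Import Order.TTheory GRing.Theory Num.Theory.
Local Open Scope ring_scope.

(* Put mass 1 on the node [v] and let every non-input node pass its mass
   back to its in-neighbours in equal shares [1/d], while input nodes keep
   theirs.  The mass reaching input [x] after [n] backward steps is the total
   weight of the paths with [n] edges from [x] to [v]; mass is conserved, and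
   by acyclicity no mass is left in transit after [#|V|] steps.  Hence the
   path sums of all inputs add up to 1, and under (S) they are all equal. *)

Section PathWeights.
Set Implicit Arguments. Unset Strict Implicit.
Variables (R : numFieldType) (V : finType) (e : rel V).

Definition path_weight (s : seq V) : R := \prod_(p <- s) (indeg e p)%:R^-1.

Definition walk_weight n (x v : V) : R :=
  \sum_(t : n.-tuple V | is_dpath e x v t) path_weight t.

Definition edge_weight (u v : V) : R := if e u v then (indeg e v)%:R^-1 else 0.

Lemma walk_weight0 x v : walk_weight 0 x v = (x == v)%:R.
Proof.
rewrite /walk_weight big_mkcond (big_pred1 [tuple]) => [|t]; last first.
  by rewrite /= [t]tuple0; apply/esym/eqP.
by rewrite /is_dpath /=; case: (x == v); rewrite /path_weight ?big_nil.
Qed.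

Lemma walk_weightS n x v :
  walk_weight n.+1 x v = \sum_y edge_weight x y * walk_weight n y v.
Proof.
transitivity (\sum_y \sum_(t : n.-tuple V)
    (if is_dpath e x v (y :: t) then path_weight (y :: t) else 0)).
  rewrite pair_big /= /walk_weight big_mkcond /=.
  rewrite (reindex (fun p : V * n.-tuple V => [tuple of p.1 :: p.2])) //=.
  exists (fun t => (thead t, [tuple of behead t])) => [[y t] _|t _] /=.
    by congr pair; apply: val_inj.
  by rewrite [RHS]tuple_eta.
apply: eq_bigr => y _; rewrite mulr_sumr /walk_weight [RHS]big_mkcond.
apply: eq_bigr => t _; rewrite /is_dpath /edge_weight /path_weight big_cons /=.
by have [//|_] := boolP (e x y); rewrite mul0r if_same.
Qed.

Lemma sum_dpaths_walk_weight x v :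
  \sum_(s <- dpaths e x v) path_weight s = \sum_(n < #|V|) walk_weight n x v.
Proof.
rewrite /dpaths big_flatten /= big_map.
rewrite -(big_mkord xpredT (fun n => walk_weight n x v)) /index_iota subn0.
apply: eq_bigr => n _; rewrite big_map big_enum /=.
by apply: eq_bigl => t; rewrite inE.
Qed.

Lemma sum_edge_weight v : \sum_u edge_weight u v = (v \notin inputs e)%:R.
Proof.
rewrite /edge_weight -big_mkcond sumr_const.
have -> : #|[pred u | e u v]| = indeg e v by rewrite /indeg cardsE.
rewrite inE; have [->|dv_neq0] := eqVneq (indeg e v) 0%N; first by rewrite mulr0n.
by rewrite -(mulr_natr (indeg e v)%:R^-1) mulVf // pnatr_eq0.
Qed.

Lemma sum_walk_weightS k v :
  \sum_x walk_weight k.+1 x v = \sum_(y | y \notin inputs e) walk_weight k y v.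
Proof.
under eq_bigr do rewrite walk_weightS.
rewrite exchange_big [RHS]big_mkcond /=; apply: eq_bigr => y _.
by rewrite -mulr_suml sum_edge_weight; case: (y \in inputs e); rewrite ?mul0r ?mul1r.
Qed.

Lemma walk_weight_conservation k v :
  \sum_(n < k) \sum_(x in inputs e) walk_weight n x v
    + \sum_x walk_weight k x v = 1.
Proof.
elim: k => [|k IHk].
  rewrite big_ord0 add0r (bigD1 v) //= walk_weight0 eqxx big1 ?addr0 //.
  by move=> x /negbTE; rewrite walk_weight0 => ->.
rewrite sum_walk_weightS -IHk (bigID (mem (inputs e)) xpredT (walk_weight k ^~ v)) big_ord_recr /=.
by rewrite addrA.
Qed.

Section Acyclic.
Hypothesis e_acyclic : acyclic e.

Lemma acyclic_path_uniq x s : path e x s -> uniq (x :: s).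
Proof.
elim/last_ind: s => [|s y IHs] //; rewrite rcons_path => /andP[xs_path e_y].
rewrite -rcons_cons rcons_uniq IHs // andbT; apply/negP => y_in.
move: xs_path e_y; case/splitPl: y_in => s1 s2 s1y.
rewrite cat_path last_cat s1y => /andP[_ ys2_path] e_y.
by apply: (@e_acyclic y s2); rewrite rcons_path ys2_path e_y.
Qed.

Lemma walk_weight_ge_card n x v : (#|V| <= n)%N -> walk_weight n x v = 0.
Proof.
move=> Vn; rewrite /walk_weight big_pred0 // => t; apply/negP => /andP[t_path _].
have := card_uniqP (acyclic_path_uniq t_path); rewrite /= size_tuple => card_t.
by have := max_card (mem (x :: t)); rewrite card_t ltnNge Vn.
Qed.

Lemma sum_inputs_dpaths_weight v :
  \sum_(x in inputs e) \sum_(s <- dpaths e x v) path_weight s = 1.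
Proof.
under eq_bigr do rewrite sum_dpaths_walk_weight.
rewrite exchange_big -[RHS](walk_weight_conservation #|V| v) /=.
by rewrite [X in _ = _ + X]big1 ?addr0 // => x _; rewrite walk_weight_ge_card.
Qed.

End Acyclic.

Lemma path_weight_degree s :
  path_weight s = \prod_(k <- path_degree e s) (k%:R : R)^-1.
Proof. by rewrite /path_degree (perm_big _ (permEl (perm_sort _ _))) big_map. Qed.

Lemma symmetry_S_dpaths_weight o x y : symmetry_S e o ->
    x \in inputs e -> y \in inputs e ->
  \sum_(s <- dpaths e x o) path_weight s = \sum_(s <- dpaths e y o) path_weight s.
Proof.
move=> sym_o x_in y_in.
have sum_path_degree z : \sum_(s <- dpaths e z o) path_weight s
    = \sum_(ds <- map (path_degree e) (dpaths e z o)) \prod_(k <- ds) (k%:R : R)^-1.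
  by rewrite big_map; apply: eq_bigr => s _; rewrite path_weight_degree.
by rewrite !sum_path_degree; apply/perm_big/sym_o.
Qed.

End PathWeights.

Theorem lemma3 (R : realFieldType) (V : finType) (e : rel V) (o : V)
  (Hacyc : acyclic e) (Hleaf : leaf e o) (HS : symmetry_S e o)
  (x : V) (Hx : x \in inputs e) :
  \sum_(s <- dpaths e x o) \prod_(p <- s) ((indeg e p)%:R : R)^-1
    = (#|inputs e|%:R : R)^-1.
Proof.
have inputs_neq0 : (#|inputs e|%:R : R) != 0.
  by rewrite pnatr_eq0 -lt0n; apply/card_gt0P; exists x.
have := sum_inputs_dpaths_weight R Hacyc o.
under eq_bigr => y y_in do rewrite (symmetry_S_dpaths_weight R HS y_in Hx).
rewrite sumr_const => total; apply: (mulIf inputs_neq0).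
by rewrite mulVf // mulr_natr; exact: total.
Qed.
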